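(* Let $F\in\mathbb{C}^{n\times n}$ be an orthonormal (unitary) matrix such that every entry satisfies $|F_{ij}|\le\alpha/\sqrt{n}$ for an absolute constant $\alpha$. Then there is a constant $c>0$ depending only on $\alpha$ such that if $t\le c\,n/k$, the matrix $M=[F^{-1}\;\; I]\in\mathbb{C}^{n\times 2n}$ satisfies the $((3k,3t),\delta)$-RIP with $\delta\le 0.1$; that is, for every $v=\begin{bmatrix}\hat{x}\\ e\end{bmatrix}\in\mathbb{C}^{2n}$ with $\hat{x}\in\mathbb{C}^n$ $3k$-sparse and $e\in\mathbb{C}^n$ $3t$-sparse, $$(1-\delta)\|v\|\le\|Mv\|\le(1+\delta)\|v\|.$$
   Context: $\|\cdot\|$ denotes the Euclidean norm. A vector is $k$-sparse if it has at most $k$ nonzero entries. $I$ is the $n\times n$ identity matrix and $Mv=F^{-1}\hat{x}+e$. *)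

From mathcomp Require Import all_boot all_order all_algebra.
From mathcomp Require Import complex reals.
Set Implicit Arguments. Unset Strict Implicit. Unset Printing Implicit Defensive.
Import Order.TTheory GRing.Theory Num.Theory.
Local Open Scope ring_scope.

Definition cmod (R : realType) (z : R[i]) : R :=
  Num.sqrt (complex.Re z ^+ 2 + complex.Im z ^+ 2).

Definition vnorm (R : realType) (n : nat) (v : 'cV[R[i]]_n) : R :=
  Num.sqrt (\sum_(i < n) cmod (v i ord0) ^+ 2).

Definition ctrmx (R : realType) (n : nat) (A : 'M[R[i]]_n) : 'M[R[i]]_n :=
  (map_mx (@conjc R) A)^T.

Definition unitary (R : realType) (n : nat) (F : 'M[R[i]]_n) : Prop :=
  F *m ctrmx F = 1%:M.

Definition sparse (R : realType) (n : nat) (s : nat) (v : 'cV[R[i]]_n) : Prop :=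
  (#|[set i : 'I_n | v i ord0 != 0%R]| <= s)%N.

From mathcomp Require Import all_boot all_order all_algebra.
From mathcomp Require Import complex reals.
From mathcomp Require Import ring lra.
Import Order.TTheory GRing.Theory Num.Theory.
Local Open Scope ring_scope.

(* Since F^-1 = F^* is an isometry, |Mv|^2 = |x|^2 + |e|^2 + 2 Re <F^-1 x, e>.
   Incoherence bounds the cross term by (alpha / sqrt n) |x|_1 |e|_1, and by
   Cauchy-Schwarz on the supports |x|_1 <= sqrt (3k) |x| and |e|_1 <= sqrt (3t) |e|.
   For t k / n <= c the cross term is therefore at most (3/40) (|x|^2 + |e|^2)
   by AM-GM, so |Mv|^2 is within a factor 1 +- 3/20 of |v|^2, and
   0.9^2 <= 1 - 3/20, 1 + 3/20 <= 1.1^2. *)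

Set Implicit Arguments.
Unset Strict Implicit.
Unset Printing Implicit Defensive.

Section ComplexModulus.
Variable R : realType.
Implicit Types z w : R[i].
Local Open Scope complex_scope.

Lemma cmodE z : cmod z = Normc.normc z. Proof. by case: z. Qed.

Lemma cmod_ge0 z : 0 <= cmod z. Proof. exact: sqrtr_ge0. Qed.

Lemma cmod0 : cmod (0 : R[i]) = 0. Proof. by rewrite cmodE Normc.normc0. Qed.

Lemma cmodM z w : cmod (z * w) = cmod z * cmod w.
Proof. by rewrite !cmodE Normc.normcM. Qed.

Lemma cmodD z w : cmod (z + w) <= cmod z + cmod w.
Proof. by rewrite !cmodE le_normcD. Qed.

Lemma cmodJ z : cmod z^* = cmod z.
Proof. by case: z => a b; rewrite /cmod /= sqrrN. Qed.

Lemma cmod_sum (I : Type) (r : seq I) (P : pred I) (f : I -> R[i]) :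
  cmod (\sum_(i <- r | P i) f i) <= \sum_(i <- r | P i) cmod (f i).
Proof.
apply: (big_ind2 (fun x y => cmod x <= y)); first by rewrite cmod0.
  by move=> x1 x2 y1 y2 le1 le2; apply: le_trans (cmodD _ _) (lerD le1 le2).
by move=> i _.
Qed.

Lemma sqr_cmod z : cmod z ^+ 2 = complex.Re z ^+ 2 + complex.Im z ^+ 2.
Proof. by rewrite sqr_sqrtr // addr_ge0 // sqr_ge0. Qed.

Lemma mulJc z : z^* * z = (cmod z ^+ 2)%:C.
Proof.
rewrite sqr_cmod; case: z => a b /=; apply/eqP; rewrite eq_complex /=.
by apply/andP; split; apply/eqP; ring.
Qed.

Lemma normr_Re_le_cmod z : `|complex.Re z| <= cmod z.
Proof.
rewrite -sqrtr_sqr ler_sqrt; last by rewrite addr_ge0 // sqr_ge0.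
by rewrite lerDl sqr_ge0.
Qed.

End ComplexModulus.

Lemma sqr_sum_le_card (R : realFieldType) (I : finType) (P : pred I) (a : I -> R) :
  (\sum_(i | P i) a i) ^+ 2 <= #|P|%:R * \sum_(i | P i) a i ^+ 2.
Proof.
(* Expand [0 <= \sum_(i, j) (a i - a j) ^+ 2]. *)
have cardE b : #|P|%:R * \sum_(i | P i) b i = \sum_(i | P i) \sum_(j | P j) b j.
  by rewrite sumr_const mulr_natl.
have cardE' b : #|P|%:R * \sum_(i | P i) b i = \sum_(i | P i) \sum_(j | P j) b i.
  by rewrite mulr_sumr; apply: eq_bigr => i _; rewrite sumr_const mulr_natl.
rewrite expr2 mulr_suml; under eq_bigr do rewrite mulr_sumr.
rewrite -(@ler_pM2l _ 2) // -[2]/(1 + 1) [X in _ <= X]mulrDl mul1r.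
rewrite {1}cardE cardE' -big_split mulr_sumr ler_sum // => i _.
rewrite -big_split mulr_sumr ler_sum //= => j _.
by have := sqr_ge0 (a i - a j); rewrite sqrrB; lra.
Qed.

Section VectorNorms.
Variable R : realType.
Local Open Scope complex_scope.

Definition sqnorm n (v : 'cV[R[i]]_n) : R := \sum_i cmod (v i ord0) ^+ 2.

Definition l1norm n (v : 'cV[R[i]]_n) : R := \sum_i cmod (v i ord0).

Definition inner_re n (u v : 'cV[R[i]]_n) : R :=
  \sum_i complex.Re ((u i ord0)^* * v i ord0).

Lemma vnormE n (v : 'cV[R[i]]_n) : vnorm v = Num.sqrt (sqnorm v).
Proof. by []. Qed.

Lemma sqnorm_ge0 n (v : 'cV[R[i]]_n) : 0 <= sqnorm v.
Proof. by apply: sumr_ge0 => i _; rewrite sqr_ge0. Qed.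

Lemma sqnorm_col_mx m n (u : 'cV[R[i]]_m) (v : 'cV[R[i]]_n) :
  sqnorm (col_mx u v) = sqnorm u + sqnorm v.
Proof.
by rewrite /sqnorm big_split_ord; congr (_ + _); apply: eq_bigr => i _;
  rewrite ?col_mxEu ?col_mxEd.
Qed.

Lemma sqnormD n (u v : 'cV[R[i]]_n) :
  sqnorm (u + v) = sqnorm u + sqnorm v + 2 * inner_re u v.
Proof.
rewrite /sqnorm /inner_re mulr_sumr -!big_split; apply: eq_bigr => i _ /=.
rewrite !mxE !sqr_cmod; case: (u i ord0) => a b; case: (v i ord0) => c d /=.
ring.
Qed.

Lemma sqnorm_mx n (v : 'cV[R[i]]_n) : (sqnorm v)%:C = ((map_mx conjc v)^T *m v) ord0 ord0.
Proof. by rewrite mxE rmorph_sum; apply: eq_bigr => i _; rewrite !mxE mulJc. Qed.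

Lemma sqnorm_isometry n (G : 'M[R[i]]_n) (v : 'cV_n) :
  ctrmx G *m G = 1%:M -> sqnorm (G *m v) = sqnorm v.
Proof.
move=> isoG; apply: complexI; rewrite !sqnorm_mx map_mxM trmx_mul -mulmxA.
by rewrite (mulmxA (map_mx _ G)^T) -/(ctrmx G) isoG mul1mx.
Qed.

Lemma l1norm_sparse n s (v : 'cV[R[i]]_n) :
  sparse s v -> l1norm v ^+ 2 <= s%:R * sqnorm v.
Proof.
rewrite /sparse; set A := [set i | _] => cardA.
have restrict (f : R[i] -> R) : f 0 = 0 ->
    \sum_i f (v i ord0) = \sum_(i in A) f (v i ord0).
  move=> f0; rewrite (bigID (mem A)) /= [X in _ + X]big1 ?addr0 //.
  by move=> i; rewrite inE negbK => /eqP ->.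
rewrite /l1norm /sqnorm (restrict (@cmod R)) ?cmod0 //.
rewrite (restrict (fun z => cmod z ^+ 2)) ?cmod0 ?expr0n //.
apply: le_trans (sqr_sum_le_card _ _) _; apply: ler_wpM2r; last by rewrite ler_nat.
by apply: sumr_ge0 => i _; rewrite sqr_ge0.
Qed.

Lemma normr_inner_re_le n (u v : 'cV[R[i]]_n) :
  `|inner_re u v| <= \sum_i cmod (u i ord0) * cmod (v i ord0).
Proof.
apply: le_trans (ler_norm_sum _ _ _) _; apply: ler_sum => i _.
by apply: le_trans (normr_Re_le_cmod _) _; rewrite cmodM cmodJ.
Qed.

Lemma cmod_mulmx_le n (G : 'M[R[i]]_n) (v : 'cV_n) beta i :
  (forall i j, cmod (G i j) <= beta) -> cmod ((G *m v) i ord0) <= beta * l1norm v.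
Proof.
move=> Gbeta; rewrite mxE; apply: le_trans (cmod_sum _ _ _) _.
rewrite /l1norm mulr_sumr; apply: ler_sum => j _; rewrite cmodM.
by apply: ler_wpM2r; [exact: cmod_ge0 | exact: Gbeta].
Qed.

Lemma sqr_inner_re_sparse_le n (G : 'M[R[i]]_n) (u v : 'cV_n) beta s t :
  (forall i j, cmod (G i j) <= beta) -> sparse s u -> sparse t v ->
  inner_re (G *m u) v ^+ 2 <= beta ^+ 2 * s%:R * t%:R * (sqnorm u * sqnorm v).
Proof.
move=> Gbeta su tv; set d := inner_re _ _.
have d_le : `|d| <= beta * l1norm u * l1norm v.
  apply: le_trans (normr_inner_re_le _ _) _; rewrite mulr_sumr.
  apply: ler_sum => i _; apply: ler_wpM2r; first exact: cmod_ge0.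
  exact: cmod_mulmx_le.
have l1_le : l1norm u ^+ 2 * l1norm v ^+ 2 <= s%:R * t%:R * (sqnorm u * sqnorm v).
  by rewrite [leRHS]mulrACA; apply: ler_pM; rewrite ?sqr_ge0 ?l1norm_sparse.
rewrite -(real_normK (num_real d)).
apply: le_trans (_ : (beta * l1norm u * l1norm v) ^+ 2 <= _).
  by rewrite ler_sqr ?nnegrE // (le_trans _ d_le).
have -> : (beta * l1norm u * l1norm v) ^+ 2 = beta ^+ 2 * (l1norm u ^+ 2 * l1norm v ^+ 2).
  by ring.
rewrite -[leRHS]mulrA -[leRHS]mulrA; apply: ler_wpM2l; first exact: sqr_ge0.
by rewrite mulrA.
Qed.

End VectorNorms.

Section Unitary.
Variables (R : realType) (n : nat).
Implicit Types F : 'M[R[i]]_n.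

Lemma ctrmxK F : ctrmx (ctrmx F) = F.
Proof. by apply/matrixP => i j; rewrite !mxE conjcK. Qed.

Lemma unitary_invmx F : unitary F -> invmx F = ctrmx F.
Proof.
move=> unitF; have [Funit _] := mulmx1_unit unitF.
by rewrite -[RHS](mulKmx Funit) unitF mulmx1.
Qed.

Lemma unitary_invmx_isometry F : unitary F -> ctrmx (invmx F) *m invmx F = 1%:M.
Proof. by move=> unitF; rewrite unitary_invmx // ctrmxK. Qed.

End Unitary.

Section RealBounds.
Variable R : rcfType.

Lemma normr_le_AMGM (d q a b : R) : 0 <= q -> 0 <= a -> 0 <= b ->
  d ^+ 2 <= q ^+ 2 * (a * b) -> 2 * `|d| <= q * (a + b).
Proof.
move=> q0 a0 b0 d_le; rewrite -ler_sqr ?nnegrE ?mulr_ge0 ?addr_ge0 //.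
rewrite exprMn real_normK ?num_real //.
have amgm : 4 * (a * b) <= (a + b) ^+ 2.
  by have := sqr_ge0 (a - b); rewrite sqrrB sqrrD; lra.
apply: le_trans (_ : 4 * (q ^+ 2 * (a * b)) <= _); first lra.
by rewrite exprMn mulrCA ler_wpM2l ?sqr_ge0.
Qed.

Lemma sqrtr_sandwich (delta a b : R) : 0 <= delta <= 1 -> 0 <= a ->
  (1 - delta) ^+ 2 * a <= b -> b <= (1 + delta) ^+ 2 * a ->
  (1 - delta) * Num.sqrt a <= Num.sqrt b <= (1 + delta) * Num.sqrt a.
Proof.
move=> /andP[delta0 delta1] a0 lo hi.
have sqrt_scale x : 0 <= x -> x * Num.sqrt a = Num.sqrt (x ^+ 2 * a).
  by move=> x0; rewrite sqrtrM ?sqr_ge0 // sqrtr_sqr ger0_norm.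
have b0 : 0 <= b := le_trans (mulr_ge0 (sqr_ge0 _) a0) lo.
by rewrite !sqrt_scale ?ler_sqrt ?lo ?hi ?mulr_ge0 ?sqr_ge0 //; lra.
Qed.

End RealBounds.

(* The [+ 1] keeps the constant finite when [alpha = 0]. *)
Definition rip_const (R : realFieldType) (alpha : R) : R := (400 * (alpha ^+ 2 + 1))^-1.

Lemma rip_const_gt0 (R : realFieldType) (alpha : R) : 0 < rip_const alpha.
Proof. by rewrite invr_gt0 mulr_gt0 // ltr_pwDr ?sqr_ge0. Qed.

Lemma rip_budget (R : realFieldType) (alpha : R) (n k t : nat) :
  t%:R <= rip_const alpha * n%:R / k%:R ->
  alpha ^+ 2 / n%:R * (3 * k)%:R * (3 * t)%:R <= (3 / 20) ^+ 2.
Proof.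
have [-> _|k_gt0] := posnP k; first by rewrite muln0 mulr0 mul0r; lra.
have [-> _|n_gt0] := posnP n; first by rewrite invr0 mulr0 !mul0r; lra.
have kR : 0 < k%:R :> R by rewrite ltr0n.
have nR : 0 < n%:R :> R by rewrite ltr0n.
rewrite ler_pdivlMr // => budget.
have density : t%:R * k%:R / n%:R <= rip_const alpha by rewrite ler_pdivrMr.
have alpha_c : alpha ^+ 2 * rip_const alpha <= 1 / 400.
  by rewrite /rip_const ler_pdivrMr ?mulr_gt0 ?ltr_pwDr ?sqr_ge0 //; lra.
have -> : alpha ^+ 2 / n%:R * (3 * k)%:R * (3 * t)%:R =
          9 * (alpha ^+ 2 * (t%:R * k%:R / n%:R)) by rewrite !natrM; field; rewrite gt_eqF.
have := ler_wpM2l (sqr_ge0 alpha) density; lra.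
Qed.

Theorem lemma2 (R : realType) (alpha : R) :
  exists c : R, 0 < c /\
  forall (n : nat) (F : 'M[R[i]]_n),
    unitary F ->
    (forall i j, cmod (F i j) <= alpha / Num.sqrt (n%:R)) ->
    forall k t : nat, t%:R <= c * n%:R / k%:R ->
    forall (xh e : 'cV[R[i]]_n),
      sparse (3 * k) xh -> sparse (3 * t) e ->
      let M : 'M[R[i]]_(n, n + n) := row_mx (invmx F) 1%:M in
      let v : 'cV[R[i]]_(n + n) := col_mx xh e in
      (1 - 1/10) * vnorm v <= vnorm (M *m v) /\
      vnorm (M *m v) <= (1 + 1/10) * vnorm v.
Proof.
exists (rip_const alpha); split; first exact: rip_const_gt0.
move=> n F unitF F_bound k t budget xh e xh_sparse e_sparse M v.
set G := invmx F; set d := inner_re (G *m xh) e.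
have G_bound i j : cmod (G i j) <= alpha / Num.sqrt n%:R.
  by rewrite /G unitary_invmx // !mxE cmodJ.
have sqnormMv : sqnorm (M *m v) = sqnorm v + 2 * d.
  rewrite mul_row_col mul1mx sqnormD sqnorm_isometry ?unitary_invmx_isometry //.
  by rewrite sqnorm_col_mx.
have cross : 2 * `|d| <= 3 / 20 * sqnorm v.
  rewrite sqnorm_col_mx; apply: normr_le_AMGM; rewrite ?sqnorm_ge0 //; first lra.
  apply: le_trans (sqr_inner_re_sparse_le G_bound xh_sparse e_sparse) _.
  apply: ler_wpM2r; first by rewrite mulr_ge0 ?sqnorm_ge0.
  rewrite exprMn exprVn sqr_sqrtr ?ler0n //; exact: rip_budget.
have /andP[dN_le d_le] : - `|d| <= d <= `|d| by rewrite -ler_norml.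
have v_ge0 := sqnorm_ge0 v.
by rewrite !vnormE sqnormMv; apply/andP/sqrtr_sandwich; lra.
Qed.
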